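(* Let $\zeta\in\mathbb{C}^*$. The group $\overline{G}_q(\zeta):=\mathrm{PSL}_q(2,\mathbb{Z})|_{q=\zeta}$ is finite if and only if $\zeta$ is a primitive $n$-th root of unity for some $n\in\{2,3,4,5\}$.
   Context: Let $q$ be a formal parameter and let $R_q=\begin{pmatrix} q & 1\\ 0 & 1\end{pmatrix}$, $S_q=\begin{pmatrix} 0 & -q^{-1}\\ 1 & 0\end{pmatrix}\in \mathrm{GL}(2,\mathbb{Z}[q,q^{-1}])$. Let $G_q=\langle R_q,S_q\rangle$, and $\mathrm{PSL}_q(2,\mathbb{Z})=G_q/\langle qE_2,-E_2\rangle$, where $E_2$ is the $2\times2$ identity matrix and $\langle qE_2,-E_2\rangle$ is a normal subgroup of $G_q$. For $\zeta\in\mathbb{C}^*$, let $G_q(\zeta)=\{M_q|_{q=\zeta}: M_q\in G_q\}\subset\mathrm{GL}(2,\mathbb{C})$, and $\mathrm{PSL}_q(2,\mathbb{Z})|_{q=\zeta}$ denotes $G_q(\zeta)/\langle \zeta E_2,-E_2\rangle$. *)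

From mathcomp Require Import all_boot all_order all_algebra.
From mathcomp Require Import complex Rstruct.
Set Implicit Arguments. Unset Strict Implicit. Unset Printing Implicit Defensive.
Import Order.TTheory GRing.Theory Num.Theory.
Local Open Scope ring_scope.

Definition C : numClosedFieldType := (Rdefinitions.R)[i].

Definition Rz (z : C) : 'M[C]_2 :=
  \matrix_(i < 2, j < 2)
    (if (val i == 0%N) && (val j == 0%N) then z
     else if (val i == 0%N) then 1
     else if (val j == 0%N) then 0 else 1).
Definition Sz (z : C) : 'M[C]_2 :=
  \matrix_(i < 2, j < 2)
    (if (val i == 0%N) && (val j == 0%N) then 0
     else if (val i == 0%N) then - z^-1
     else if (val j == 0%N) then 1 else 0).

(* G_q(z) = { M_q|_{q=z} : M_q in G_q = <R_q, S_q> }.  Since specialization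
   q |-> z is a group homomorphism (z <> 0), this is the subgroup of GL(2,C)
   generated by R_q|_{q=z}, S_q|_{q=z}. *)
Inductive in_Gz (z : C) : 'M[C]_2 -> Prop :=
  | Gz_one : in_Gz z 1%:M
  | Gz_R : in_Gz z (Rz z)
  | Gz_S : in_Gz z (Sz z)
  | Gz_mul M N : in_Gz z M -> in_Gz z N -> in_Gz z (M *m N)
  | Gz_inv M : in_Gz z M -> in_Gz z (invmx M).

(* The normal subgroup <z E_2, -E_2> = { (-1)^b z^k E_2 }. *)
Definition in_Nz (z : C) (M : 'M[C]_2) : Prop :=
  exists (b : bool) (k : int), M = ((-1) ^+ b * z ^ k)%:M.

(* PSL_q(2,Z)|_{q=z} = G_q(z) / <z E_2, -E_2> is finite: finitely many cosets. *)
Definition PSLq_spec_finite (z : C) : Prop :=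
  exists s : seq 'M[C]_2,
    forall M, in_Gz z M -> exists2 A, A \in s & in_Nz z (M *m invmx A).

(* For n in {2, 3, 4, 5} everything can be computed in Z[q]/(Phi_n): a
   breadth-first search yields the orbit of the identity under R^(+-1), S^(+-1)
   modulo the units +-q^k (it has 6, 12, 24 and 60 elements), and a
   certificate checked by evaluation shows that the generators permute these
   classes.  Evaluating at z gives finitely many cosets.
   Conversely, if there are finitely many cosets then every element has a
   scalar power.  For R this forces z^d = 1 and 1 + z + ... + z^(d-1) = 0, so
   z is a primitive n-th root of unity with n >= 2.  For M = R^3 S the lower
   left entry of M^k is U_k(1 + z + z^2, z^2), where U is the Lucas sequence,
   so some U_k vanishes at z.  As Phi_n is irreducible over Q it then vanishes
   at w = exp(2 i pi / n) too; but w U_k(1 + w + w^2, w^2) = w^k U_k(t, 1) with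
   t = 1 + 2 cos(2 pi / n), and U_k(t, 1) >= k when t >= 2, i.e. when n >= 6. *)

From Stdlib Require Rtrigo_def Rtrigo1 Rtrigo_calc.
From mathcomp Require Import all_boot all_order all_algebra all_field.
From mathcomp Require Import complex Rstruct zify ring lra.
Set Implicit Arguments. Unset Strict Implicit. Unset Printing Implicit Defensive.
Import Order.TTheory GRing.Theory Num.Theory.
Local Open Scope ring_scope.

Local Notation RR := Rdefinitions.R.
Local Notation PI := Rtrigo1.PI.
Local Notation cos := Rtrigo_def.cos.
Local Notation sin := Rtrigo_def.sin.
Local Notation PhiQ n := (map_poly (intr : int -> rat) 'Phi_n).
Local Notation pQtoC := (map_poly (ratr : rat -> C)).

Section Matrix2.
Variable R : pzRingType.

Definition mx2 (a b c d : R) : 'M[R]_2 :=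
  \matrix_(i < 2, j < 2) if val i == 0%N then (if val j == 0%N then a else b)
                         else (if val j == 0%N then c else d).

Lemma mx2_mul a b c d a' b' c' d' :
  mx2 a b c d *m mx2 a' b' c' d' =
  mx2 (a * a' + b * c') (a * b' + b * d') (c * a' + d * c') (c * b' + d * d').
Proof.
apply/matrixP => i j; rewrite !mxE big_ord_recl big_ord1 !mxE.
by case: i j => [[|[|i]] ?] // [[|[|j]] ?].
Qed.

Lemma scale_mx2 k a b c d : k *: mx2 a b c d = mx2 (k * a) (k * b) (k * c) (k * d).
Proof.
by apply/matrixP => i j; rewrite !mxE; case: i j => [[|[|i]] ?] // [[|[|j]] ?].
Qed.

Lemma scalar_mx2 k : k%:M = mx2 k 0 0 k.
Proof.
by apply/matrixP => i j; rewrite !mxE; case: i j => [[|[|i]] ?] // [[|[|j]] ?].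
Qed.

Lemma mx2_inj a b c d a' b' c' d' : mx2 a b c d = mx2 a' b' c' d' ->
  [/\ a = a', b = b', c = c' & d = d'].
Proof. by move/matrixP=> E; move: (E 0 0) (E 0 1) (E 1 0) (E 1 1); rewrite !mxE. Qed.

Lemma mx2_1 : mx2 1 0 0 1 = 1%:M.
Proof. by rewrite scalar_mx2. Qed.

End Matrix2.

Lemma Rz_mx2 z : Rz z = mx2 z 1 0 1.
Proof.
by apply/matrixP => i j; rewrite !mxE; case: i j => [[|[|i]] ?] // [[|[|j]] ?].
Qed.

Lemma Sz_mx2 z : Sz z = mx2 0 (- z^-1) 1 0.
Proof.
by apply/matrixP => i j; rewrite !mxE; case: i j => [[|[|i]] ?] // [[|[|j]] ?].
Qed.

Fixpoint qadd (p q : seq int) : seq int :=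
  match p, q with
  | a :: p', b :: q' => (a + b) :: qadd p' q'
  | [::], _ => q
  | _, [::] => p
  end.

Definition qscale (a : int) (p : seq int) : seq int := map ( *%R a) p.

Lemma size_qadd p q : size (qadd p q) = maxn (size p) (size q).
Proof. by elim: p q => [|a p IH] [|b q] //=; rewrite IH maxnSS. Qed.

(* Elements of Z[q]/(q^d + f_(d-1) q^(d-1) + ... + f_0), with d = size f, are
   their coefficient lists of length d, lowest degree first. *)
Section QuotientRing.
Variable f : seq int.

Definition qzero : seq int := nseq (size f) 0.
Definition qone : seq int := 1 :: nseq (size f).-1 0.
Definition qmulX (p : seq int) : seq int :=
  qadd (belast 0 p) (qscale (- last 0 p) f).
Definition qmul (p q : seq int) : seq int :=
  foldr (fun a r => qadd (qscale a q) (qmulX r)) qzero p.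
Definition qXn (k : nat) : seq int := iter k qmulX qone.

Lemma size_qmulX p : size p = size f -> size (qmulX p) = size f.
Proof. by move=> sp; rewrite size_qadd size_belast size_map sp maxnn. Qed.

Lemma size_qmul p q : size q = size f -> size (qmul p q) = size f.
Proof.
move=> sq; elim: p => [|a p IH] /=; first by rewrite size_nseq.
by rewrite size_qadd size_map size_qmulX // sq maxnn.
Qed.

Lemma size_qXn k : (0 < size f)%N -> size (qXn k) = size f.
Proof.
move=> f_gt0; elim: k => [|k IH] /=; last exact: size_qmulX.
by rewrite size_nseq prednK.
Qed.

End QuotientRing.

(* Keeps [qeval_Xn] applicable after simplification. *)
Arguments qXn : simpl never.

Section Evaluation.
Variables (R : comPzRingType) (z : R).

Fixpoint qeval (p : seq int) : R := if p is a :: q then a%:~R + z * qeval q else 0.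

Lemma qeval_add p q : qeval (qadd p q) = qeval p + qeval q.
Proof.
elim: p q => [|a p IH] [|b q] /=; rewrite ?add0r ?addr0 //.
by rewrite IH intrD mulrDr addrACA.
Qed.

Lemma qeval_scale a p : qeval (qscale a p) = a%:~R * qeval p.
Proof.
elim: p => [|b p IH] /=; first by rewrite mulr0.
by rewrite IH intrM mulrDr mulrCA.
Qed.

Lemma qeval_nseq0 k : qeval (nseq k 0) = 0.
Proof. by elim: k => //= k ->; rewrite mulr0 addr0. Qed.

Lemma qeval_belast x p :
  qeval (belast x p) + (last x p)%:~R * z ^+ size p = x%:~R + z * qeval p.
Proof.
elim: p x => [|y p IH] x /=; first by rewrite add0r mulr1 mulr0 addr0.
by rewrite -addrA exprS mulrCA -mulrDr IH.
Qed.

Variable f : seq int.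
Hypothesis f_root : z ^+ size f + qeval f = 0.

Lemma qeval_mulX p : size p = size f -> qeval (qmulX f p) = z * qeval p.
Proof.
move=> sp; have := qeval_belast 0 p; rewrite sp rmorph0 add0r => <-.
by rewrite qeval_add qeval_scale -(addr0_eq f_root) intrN mulrNN.
Qed.

Lemma qeval_mul p q : size q = size f -> qeval (qmul f p q) = qeval p * qeval q.
Proof.
move=> sq; elim: p => [|a p IH] /=; first by rewrite qeval_nseq0 mul0r.
by rewrite qeval_add qeval_scale qeval_mulX ?size_qmul // IH mulrDl mulrA.
Qed.

Lemma qeval_one : qeval (qone f) = 1.
Proof. by rewrite /= qeval_nseq0 mulr0 addr0. Qed.

Lemma qeval_Xn k : (0 < size f)%N -> qeval (qXn f k) = z ^+ k.
Proof.
move=> f_gt0; elim: k => [|k IH] /=; first exact: qeval_one.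
by rewrite qeval_mulX ?size_qXn // IH exprS.
Qed.

End Evaluation.

Definition qmx := (seq int * seq int * seq int * seq int)%type.

Section QuotientMatrices.
Variables (f : seq int) (n : nat).

Definition qmx_mul (A B : qmx) : qmx :=
  let: (a, b, c, d) := A in let: (a', b', c', d') := B in
  (qadd (qmul f a a') (qmul f b c'), qadd (qmul f a b') (qmul f b d'),
   qadd (qmul f c a') (qmul f d c'), qadd (qmul f c b') (qmul f d d')).
Definition qmx_scale (u : seq int) (A : qmx) : qmx :=
  let: (a, b, c, d) := A in (qmul f u a, qmul f u b, qmul f u c, qmul f u d).
Definition qmx_wf (A : qmx) : bool :=
  let: (a, b, c, d) := A in all (fun p => size p == size f) [:: a; b; c; d].
Definition qmx_one : qmx := (qone f, qzero f, qzero f, qone f).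

Definition qunits : seq (seq int) :=
  [seq qscale s (qXn f k) | s <- [:: 1; -1], k <- iota 0 n].
Definition qmx_class (A : qmx) : seq qmx := [seq qmx_scale u A | u <- qunits].

Definition qmx_closed (gens L : seq qmx) : bool :=
  let classes := map qmx_class L in
  all (fun g => all (fun A => has (fun c => qmx_mul g A \in c) classes) L) gens.

Definition qmx_grow (gens : seq qmx) (st : seq qmx * seq (seq qmx)) :=
  foldl (fun st M => if has (fun c => M \in c) st.2 then st
                     else (rcons st.1 M, qmx_class M :: st.2))
        st [seq qmx_mul g A | g <- gens, A <- st.1].

Definition qmx_orbit (gens : seq qmx) (fuel : nat) : seq qmx :=
  (iter fuel (qmx_grow gens) ([:: qmx_one], [:: qmx_class qmx_one])).1.

(* R, R^-1, S and S^-1, with q^-1 represented by q^(n-1). *)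
Definition qmx_gens : seq qmx :=
  let x := qXn f 1 in let x' := qXn f n.-1 in
  [:: (x, qone f, qzero f, qone f); (x', qscale (-1) x', qzero f, qone f);
      (qzero f, qscale (-1) x', qone f, qzero f);
      (qzero f, qone f, qscale (-1) x, qzero f)].

End QuotientMatrices.

Section MatrixEvaluation.
Variables (R : comPzRingType) (z : R) (f : seq int) (n : nat).
Hypothesis f_root : z ^+ size f + qeval z f = 0.

Definition qmx_eval (A : qmx) : 'M[R]_2 :=
  let: (a, b, c, d) := A in mx2 (qeval z a) (qeval z b) (qeval z c) (qeval z d).

Lemma qmx_eval_one : qmx_eval (qmx_one f) = 1%:M.
Proof. by rewrite /= !qeval_nseq0 mulr0 addr0 rmorph1 mx2_1. Qed.

Lemma qmx_eval_mul A B : qmx_wf f B ->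
  qmx_eval (qmx_mul f A B) = qmx_eval A *m qmx_eval B.
Proof.
case: A => [[[a b] c] d]; case: B => [[[a' b'] c'] d'] /=.
by move=> /and5P[/eqP ? /eqP ? /eqP ? /eqP ? _]; rewrite mx2_mul !qeval_add !qeval_mul.
Qed.

Lemma qmx_eval_scale u B : qmx_wf f B ->
  qmx_eval (qmx_scale f u B) = qeval z u *: qmx_eval B.
Proof.
case: B => [[[a b] c] d] /=.
by move=> /and5P[/eqP ? /eqP ? /eqP ? /eqP ? _]; rewrite scale_mx2 !qeval_mul.
Qed.

Lemma qeval_units u : (0 < size f)%N -> u \in qunits f n ->
  exists (b : bool) (k : nat), qeval z u = (-1) ^+ b * z ^+ k.
Proof.
move=> f_gt0 /allpairsP[[s k] /= [s_pm _ ->]].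
rewrite qeval_scale qeval_Xn //; exists (s != 1), k; congr (_ * _).
by move: s_pm; rewrite !inE => /orP[] /eqP ->.
Qed.

Lemma qmx_closed_eval gens L g A : (0 < size f)%N -> all (qmx_wf f) L ->
  qmx_closed f n gens L -> g \in gens -> A \in L ->
  exists2 B, B \in L & exists (b : bool) (k : nat),
    qmx_eval g *m qmx_eval A = ((-1) ^+ b * z ^+ k) *: qmx_eval B.
Proof.
move=> f_gt0 /allP L_wf /allP closed g_in A_in.
have /allP/(_ A A_in)/hasP[_ /mapP[B B_in ->] /mapP[u u_in gA]] := closed g g_in.
exists B => //; have [b [k u_val]] := qeval_units f_gt0 u_in.
by exists b, k; rewrite -qmx_eval_mul ?L_wf // gA qmx_eval_scale ?L_wf // u_val.
Qed.

End MatrixEvaluation.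

Lemma prim_root_sum_eq0 (R : idomainType) n (z : R) :
  (1 < n)%N -> n.-primitive_root z -> \sum_(i < n) z ^+ i = 0.
Proof.
move=> n_gt1 z_prim; have /eqP := subrX1 z n.
rewrite (prim_expr_order z_prim) subrr eq_sym mulf_eq0 subr_eq0 => /orP[|/eqP //].
by rewrite -(prim_order_dvd z_prim 1) dvdn1 gtn_eqF.
Qed.

Lemma qeval_nseq1 (R : comPzRingType) (z : R) k :
  qeval z (nseq k 1) = \sum_(i < k) z ^+ i.
Proof.
elim: k => [|k IH] /=; first by rewrite big_ord0.
by rewrite big_ord_recl IH mulr_sumr; under eq_bigr do rewrite -exprS.
Qed.

(* Phi_n without its leading term: Phi_p = 1 + q + ... + q^(p-1) for p prime,
   and Phi_4 = 1 + q^2. *)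
Definition phi_low (n : nat) : seq int := if n == 4%N then [:: 1; 0] else nseq n.-1 1.

Lemma phi_low_root (R : idomainType) n (z : R) : n \in [:: 2; 3; 4; 5]%N ->
  n.-primitive_root z -> z ^+ size (phi_low n) + qeval z (phi_low n) = 0.
Proof.
move=> n_small z_prim; rewrite /phi_low; case: eqP => [n4 | _].
  have := exp_prim_root z_prim 2; rewrite n4 => z2_prim.
  have := prim_root_sum_eq0 (isT : 1 < 2)%N z2_prim.
  rewrite !big_ord_recr big_ord0 /= add0r expr0 expr1 rmorph1 rmorph0 !mulr0 addr0.
  by rewrite mulr0 addr0 addrC.
have n_gt1 : (1 < n)%N by move: n_small; rewrite !inE => /or4P[] /eqP ->.
move: z_prim (prim_root_sum_eq0 n_gt1 z_prim); case: n {n_small n_gt1} => // m _.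
by rewrite big_ord_recr /= size_nseq qeval_nseq1 addrC.
Qed.

Lemma size_phi_low_gt0 n : n \in [:: 2; 3; 4; 5]%N -> (0 < size (phi_low n))%N.
Proof. by rewrite !inE => /or4P[] /eqP ->. Qed.

Definition phi_orbit (n : nat) : seq qmx :=
  qmx_orbit (phi_low n) n (qmx_gens (phi_low n) n) 10.

Lemma phi_orbit_closed n : n \in [:: 2; 3; 4; 5]%N ->
  [&& qmx_one (phi_low n) \in phi_orbit n, all (qmx_wf (phi_low n)) (phi_orbit n)
    & qmx_closed (phi_low n) n (qmx_gens (phi_low n) n) (phi_orbit n)].
Proof. by rewrite !inE => /or4P[] /eqP ->; vm_compute. Qed.

Lemma sign_expfz_neq0 (F : fieldType) (x : F) (b : bool) (k : int) :
  x != 0 -> (-1) ^+ b * x ^ k != 0.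
Proof. by move=> x_neq0; rewrite mulf_eq0 negb_or signr_eq0 expfz_eq0 negb_and x_neq0 orbT. Qed.

Lemma invmx_unique (R : comUnitRingType) n (A B : 'M[R]_n) : A *m B = 1%:M -> invmx A = B.
Proof.
move=> AB; have [A_unit _] := mulmx1_unit AB.
by rewrite -[RHS]mul1mx -(mulVmx A_unit) -mulmxA AB mulmx1.
Qed.

Lemma invmxM (R : comUnitRingType) n (M N : 'M[R]_n) : M \in unitmx -> N \in unitmx ->
  invmx (M *m N) = invmx N *m invmx M.
Proof.
move=> M_unit N_unit; apply: invmx_unique.
by rewrite mulmxA -(mulmxA M) mulmxV // mulmx1 mulmxV.
Qed.

Section Generators.
Variable z : C.
Hypothesis z_neq0 : z != 0.

Lemma Rz_mulV : Rz z *m mx2 z^-1 (- z^-1) 0 1 = 1%:M.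
Proof. by rewrite Rz_mx2 mx2_mul -mx2_1; congr mx2; field. Qed.

Lemma Sz_mulV : Sz z *m mx2 0 1 (- z) 0 = 1%:M.
Proof. by rewrite Sz_mx2 mx2_mul -mx2_1; congr mx2; field. Qed.

Lemma in_Gz_unit M : in_Gz z M -> M \in unitmx.
Proof.
elim=> [||| M1 M2 _ M1_unit _ M2_unit | M1 _ M1_unit].
- exact: unitmx1.
- exact: (mulmx1_unit Rz_mulV).1.
- exact: (mulmx1_unit Sz_mulV).1.
- by rewrite unitmx_mul M1_unit.
- by rewrite unitmx_inv.
Qed.

End Generators.

Section CosetStability.
Variables (z : C) (E : seq 'M[C]_2).
Hypothesis z_neq0 : z != 0.

Definition stabilizes (M : 'M[C]_2) : Prop :=
  forall A, A \in E -> exists2 B, B \in E &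
    exists (b : bool) (k : int), M *m A = ((-1) ^+ b * z ^ k) *: B.

Lemma stabilizes1 : stabilizes 1%:M.
Proof.
by move=> A A_in; exists A => //; exists false, 0; rewrite mul1mx expr0z mulr1 scale1r.
Qed.

Lemma stabilizesM M N : stabilizes M -> stabilizes N -> stabilizes (M *m N).
Proof.
move=> M_st N_st A /N_st[B /M_st[B' B'_in [b' [k' MB]]] [b [k NA]]].
exists B' => //; exists (b (+) b'), (k + k').
by rewrite -mulmxA NA -scalemxAr MB scalerA signr_addb expfzDr // mulrACA.
Qed.

Lemma stabilizes_Gz :
  (forall M, M \in [:: Rz z; invmx (Rz z); Sz z; invmx (Sz z)] -> stabilizes M) ->
  forall M, in_Gz z M -> stabilizes M /\ stabilizes (invmx M).
Proof.
move=> gens_st M.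
have [R_st R'_st S_st S'_st] : [/\ stabilizes (Rz z), stabilizes (invmx (Rz z)),
                                   stabilizes (Sz z) & stabilizes (invmx (Sz z))].
  split; apply: gens_st; first exact: mem_head.
  - exact/mem_behead/mem_head.
  - exact/mem_behead/mem_behead/mem_head.
  - exact/mem_behead/mem_behead/mem_behead/mem_head.
elim=> [||| M1 M2 M1_Gz [M1_st M1'_st] M2_Gz [M2_st M2'_st] | M1 _ [M1_st M1'_st]].
- by rewrite invmx1; split; apply: stabilizes1.
- by [].
- by [].
- by rewrite invmxM ?(in_Gz_unit z_neq0) //; split; apply: stabilizesM.
- by rewrite invmxK.
Qed.

Lemma finite_of_stabilizes : 1%:M \in E ->
  (forall M, in_Gz z M -> stabilizes M) -> PSLq_spec_finite z.
Proof.
move=> E1 G_st; exists E => M M_Gz.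
have [B B_in [b [k MB]]] := G_st M M_Gz _ E1; rewrite mulmx1 in MB.
have c_unit : (-1) ^+ b * z ^ k \is a GRing.unit by rewrite unitfE sign_expfz_neq0.
have B_unit : B \in unitmx by rewrite -(unitmxZ _ c_unit) -MB (in_Gz_unit z_neq0).
by exists B => //; exists b, k; rewrite MB -scalemxAl mulmxV // scalemx1.
Qed.

End CosetStability.

Section SmallOrders.
Variables (z : C) (n : nat).
Hypotheses (n_small : n \in [:: 2; 3; 4; 5]%N) (z_prim : n.-primitive_root z).

Let f_root := phi_low_root n_small z_prim.
Let f_gt0 := size_phi_low_gt0 n_small.

Lemma prim_root_neq0 : z != 0.
Proof. by rewrite (prim_root_eq0 z_prim) gtn_eqF // (prim_order_gt0 z_prim). Qed.

Lemma qmx_eval_gens :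
  map (qmx_eval z) (qmx_gens (phi_low n) n) = [:: Rz z; invmx (Rz z); Sz z; invmx (Sz z)].
Proof.
have z'E : z ^+ n.-1 = z^-1.
  apply: (mulfI prim_root_neq0); rewrite mulfV ?prim_root_neq0 // -exprS.
  by rewrite prednK ?(prim_order_gt0 z_prim) // (prim_expr_order z_prim).
rewrite (invmx_unique (Rz_mulV prim_root_neq0)) (invmx_unique (Sz_mulV prim_root_neq0)).
by rewrite Rz_mx2 Sz_mx2 /= !qeval_scale !qeval_Xn // !qeval_nseq0 mulr0 addr0
  rmorph1 rmorphN1 !mulN1r z'E expr1.
Qed.

Lemma PSLq_finite_small_order : PSLq_spec_finite z.
Proof.
have /and3P[one_in L_wf L_closed] := phi_orbit_closed n_small.
have gens_st M : M \in [:: Rz z; invmx (Rz z); Sz z; invmx (Sz z)] ->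
    stabilizes z (map (qmx_eval z) (phi_orbit n)) M.
  rewrite -qmx_eval_gens => /mapP[g g_in ->] _ /mapP[A A_in ->].
  have [B B_in [b [k gA]]] := qmx_closed_eval f_root f_gt0 L_wf L_closed g_in A_in.
  by exists (qmx_eval z B); [exact: map_f | exists b, k].
apply: (finite_of_stabilizes (E := map (qmx_eval z) (phi_orbit n)) prim_root_neq0).
  by rewrite -(qmx_eval_one z (phi_low n)) map_f.
by move=> M /(stabilizes_Gz prim_root_neq0 gens_st) [].
Qed.

End SmallOrders.

Section ScalarPowers.
Variable z : C.
Hypothesis z_neq0 : z != 0.

Lemma in_Gz_expr M k : in_Gz z M -> in_Gz z (M ^+ k).
Proof. by move=> M_Gz; elim: k => [|k IH]; [exact: Gz_one | rewrite exprS; exact: Gz_mul]. Qed.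

Lemma in_Nz_coset P A : P \in unitmx -> in_Nz z (P *m invmx A) ->
  exists2 c : C, c != 0 & P = c *: A.
Proof.
move=> P_unit [b [k PA]]; set c := _ * _ in PA.
have c_neq0 : c != 0 by rewrite sign_expfz_neq0.
have A_unit : A \in unitmx.
  have : P *m invmx A \in unitmx by rewrite PA -scalemx1 unitmxZ ?unitmx1 ?unitfE.
  by rewrite unitmx_mul unitmx_inv => /andP[].
by exists c => //; rewrite -mul_scalar_mx -PA mulmxKV.
Qed.

Lemma finite_scalar_power M : PSLq_spec_finite z -> in_Gz z M ->
  exists2 d, (0 < d)%N & exists c, M ^+ d = c%:M.
Proof.
move=> [s s_cosets] M_Gz.
(* Two of the powers M^0, ..., M^(size s) lie in the same coset. *)
have coset_of (i : 'I_(size s).+1) : exists j : 'I_(size s),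
    in_Nz z (M ^+ i *m invmx s`_j).
  have [A A_in A_coset] := s_cosets _ (in_Gz_expr i M_Gz).
  by exists (Ordinal (etrans (index_mem A s) A_in)); rewrite /= nth_index.
have [r r_coset] := fin_all_exists coset_of.
have /injectivePn[i [j ij rij]] : ~~ injectiveb r.
  by apply/injectiveP => /leq_card; rewrite !card_ord ltnn.
wlog lt_ij : i j ij rij / (i < j)%N.
  move=> IH; case: (ltngtP i j) => [|lt_ji|/val_inj eq_ij]; first exact: IH.
    by apply: (IH j i); rewrite // eq_sym.
  by rewrite eq_ij eqxx in ij.
have Mpow_unit k : M ^+ k \in unitmx by apply: (in_Gz_unit z_neq0); apply: in_Gz_expr.
have [ci ci_neq0 Mi] := in_Nz_coset (Mpow_unit i) (r_coset i).
have [cj _ Mj] := in_Nz_coset (Mpow_unit j) (r_coset j).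
exists (j - i)%N; first by rewrite subn_gt0.
exists (cj / ci); apply: (mulrI (Mpow_unit i)).
by rewrite -exprD subnKC ?(ltnW lt_ij) // Mj -rij Mi -mulmxE scalar_mxC mul_scalar_mx scalerA divfK.
Qed.

End ScalarPowers.

Lemma root_PhiQ n (x : C) : n.-primitive_root x -> root (pQtoC (PhiQ n)) x.
Proof.
move=> x_prim; have n_gt0 := prim_order_gt0 x_prim.
have PhiQE d : pQtoC (PhiQ d) = map_poly intr 'Phi_d.
  by rewrite -map_poly_comp; apply: eq_map_poly => a /=; rewrite rmorph_int.
have Phi_horner d : (0 < d)%N ->
    \prod_(e <- divisors d) (map_poly intr 'Phi_e).[x] = x ^+ d - 1.
  move=> d_gt0; have := prod_Cyclotomic d_gt0.
  move/(congr1 (fun p => (map_poly (intr : int -> C) p).[x])).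
  by rewrite /= rmorph_prod horner_prod rmorphB rmorph1 /= map_polyXn !hornerE.
have /eqP := Phi_horner n n_gt0; rewrite (prim_expr_order x_prim) subrr.
rewrite prodf_seq_eq0 => /hasP[d d_div /= /eqP Phi_d_x].
have d_dvd_n : (d %| n)%N by rewrite dvdn_divisors.
have d_gt0 : (0 < d)%N by apply: dvdn_gt0 d_dvd_n.
have xd1 : x ^+ d = 1.
  apply/eqP; rewrite -subr_eq0 -(Phi_horner d d_gt0) (big_rem d) ?divisors_id //=.
  by rewrite Phi_d_x mul0r.
have n_dvd_d : (n %| d)%N by rewrite (prim_order_dvd x_prim) xd1.
rewrite PhiQE; suff -> : n = d by apply/rootP.
by apply/eqP; rewrite eqn_dvd n_dvd_d d_dvd_n.
Qed.

(* The irreducibility of Phi_n over Q, obtained from minimal polynomials in algC. *)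
Lemma PhiQ_dvd n (q : {poly rat}) : (0 < n)%N -> ~~ coprimep (PhiQ n) q -> PhiQ n %| q.
Proof.
move=> n_gt0 not_coprime; set g := gcdp (PhiQ n) q.
have [a a_root] : exists a, root (map_poly (ratr : rat -> algC) g) a.
  by apply/closed_rootP; rewrite size_map_poly.
have [w w_prim] := C_prim_root_exists n_gt0.
have PhiC : map_poly (ratr : rat -> algC) (PhiQ n) = cyclotomic w n.
  rewrite -(Cintr_Cyclotomic w_prim) -map_poly_comp; apply: eq_map_poly => b /=.
  by rewrite rmorph_int.
have a_prim : n.-primitive_root a.
  rewrite -(root_cyclotomic w_prim) -PhiC.
  have /dvdpP[r ->] : g %| PhiQ n by apply: dvdp_gcdl.
  by rewrite rmorphM rootM a_root orbT.
have [p [p_min _] p_dvd] := minCpolyP a.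
have -> : PhiQ n = p.
  apply: (map_inj_poly (fmorph_inj (@ratr algC)) (rmorph0 _)).
  rewrite -p_min (minCpoly_cyclotomic a_prim) PhiC.
  by rewrite -(Cintr_Cyclotomic a_prim) (Cintr_Cyclotomic w_prim).
by apply: dvdp_trans (dvdp_gcdr (PhiQ n) q); rewrite -p_dvd.
Qed.

Lemma root_prim_conj n (p : {poly rat}) (x y : C) :
  n.-primitive_root x -> n.-primitive_root y -> root (pQtoC p) x -> root (pQtoC p) y.
Proof.
move=> x_prim y_prim px; have [coprime | not_coprime] := boolP (coprimep (PhiQ n) p).
  rewrite -(coprimep_map (@ratr C)) in coprime.
  by have := coprimep_root coprime (root_PhiQ x_prim); rewrite -/(root _ _) px.
have /divpK <- := PhiQ_dvd (prim_order_gt0 x_prim) not_coprime.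
by rewrite rmorphM rootM root_PhiQ ?orbT.
Qed.

Section Lucas.
Variable R : pzRingType.

Fixpoint lucas (P Q : R) (m : nat) : R :=
  match m with
  | 0 => 0
  | 1 => 1
  | S (S m' as m1) => P * lucas P Q m1 - Q * lucas P Q m'
  end.

Lemma lucasSS P Q m : lucas P Q m.+2 = P * lucas P Q m.+1 - Q * lucas P Q m.
Proof. by []. Qed.

Lemma lucas_ind (T : nat -> Prop) : T 0%N -> T 1%N ->
  (forall m, T m -> T m.+1 -> T m.+2) -> forall m, T m.
Proof.
move=> T0 T1 TSS m; suff : T m /\ T m.+1 by case.
by elim: m => [|m [Tm TSm]]; split => //; apply: TSS.
Qed.

End Lucas.

Lemma rmorph_lucas (R S : pzRingType) (f : {rmorphism R -> S}) P Q m :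
  f (lucas P Q m) = lucas (f P) (f Q) m.
Proof.
elim/lucas_ind: m => [|| m IH IHS]; rewrite ?rmorph0 ?rmorph1 //.
by rewrite !lucasSS rmorphB !rmorphM IH IHS.
Qed.

Lemma lucas_scale (R : comNzRingType) (c P Q : R) m :
  c * lucas (c * P) (c ^+ 2 * Q) m = c ^+ m * lucas P Q m.
Proof.
elim/lucas_ind: m => [|| m IH IHS]; [by rewrite /= !mulr0 | by rewrite /= !mulr1 |].
rewrite !lucasSS.
transitivity (c * P * (c * lucas (c * P) (c ^+ 2 * Q) m.+1)
              - c ^+ 2 * Q * (c * lucas (c * P) (c ^+ 2 * Q) m)); first ring.
by rewrite IHS IH !exprS; ring.
Qed.

Lemma lucas_ge (R : realDomainType) (t : R) m : 2 <= t -> m%:R <= lucas t 1 m.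
Proof.
move=> t_ge2; suff : m%:R <= lucas t 1 m /\ lucas t 1 m + 1 <= lucas t 1 m.+1 by case.
elim: m => [|m [IH IHS]]; first by rewrite /= add0r.
have U_ge : m.+1%:R <= lucas t 1 m.+1 by rewrite -natr1; lra.
split=> //; rewrite lucasSS mul1r.
have : 0 <= (t - 2) * lucas t 1 m.+1 by rewrite mulr_ge0 ?subr_ge0 // (le_trans _ U_ge).
lra.
Qed.

Lemma companion_expr (R : comNzRingType) (P Q : R) m :
  mx2 P (- Q) 1 0 ^+ m.+1 =
  mx2 (lucas P Q m.+2) (- Q * lucas P Q m.+1) (lucas P Q m.+1) (- Q * lucas P Q m).
Proof.
elim: m => [|m IH]; first by rewrite expr1 /=; congr mx2; ring.
by rewrite exprSr IH -mulmxE mx2_mul; congr mx2; rewrite /= ?lucasSS; ring.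
Qed.

Lemma PI_gt0 : 0 < PI. Proof. exact/RltP/Rtrigo1.PI_RGT_0. Qed.

Lemma cos_lt1 (x : RR) : 0 < x -> x < 2 * PI -> cos x < 1.
Proof.
move=> x_gt0 x_lt2PI; have sin_gt0 : 0 < sin (x / 2).
  by apply/RltP/Rtrigo1.sin_gt_0; apply/RltP; rewrite ?R0E; lra.
have := Rtrigo1.cos_2a_sin (x / 2); rewrite !RmultE RminusE R1E.
rewrite IZRposE INRE /= mulrC divfK ?pnatr_eq0 // => ->.
by have := mulr_gt0 sin_gt0 sin_gt0; lra.
Qed.

Lemma cos_ge_half (x : RR) : 0 <= x -> x <= PI / 3 -> 1 / 2 <= cos x.
Proof.
move=> x_ge0 x_le; rewrite -[1 / 2]Rtrigo_calc.cos_PI3 RdivE IZRposE INRE /=.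
have PI_pos := PI_gt0.
by apply/RleP/Rtrigo1.cos_decr_1; apply/RleP; rewrite ?R0E; lra.
Qed.

Definition cis (x : RR) : C := Complex (cos x) (sin x).

Lemma cis0 : cis 0 = 1.
Proof. by rewrite /cis Rtrigo_def.cos_0 Rtrigo_def.sin_0. Qed.

Lemma cisD x y : cis (x + y) = cis x * cis y.
Proof.
by apply/eqP; rewrite eq_complex /= cosD sinD; apply/andP; split; apply/eqP; ring.
Qed.

Lemma cis_expr x k : cis x ^+ k = cis (x *+ k).
Proof. by elim: k => [|k IH]; rewrite ?cis0 // exprS IH mulrS cisD. Qed.

Lemma cis_add_inv x : cis x + (cis x)^-1 = ((2 * cos x)%:C)%C.
Proof.
rewrite (@mulr1_eq _ _ (cis (- x))) -?cisD ?subrr ?cis0 //.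
apply/eqP; rewrite eq_complex /= Rtrigo1.cos_neg Rtrigo1.sin_neg subrr eqxx andbT.
by apply/eqP; ring.
Qed.

Definition omega (n : nat) : C := cis (2 * PI / n%:R).

Lemma omega_prim n : (0 < n)%N -> n.-primitive_root (omega n).
Proof.
move=> n_gt0; have n_pos : 0 < n%:R :> RR by rewrite ltr0n.
have omega_n : omega n ^+ n = 1.
  rewrite /omega cis_expr -[_ *+ n]mulr_natr divfK ?gt_eqF //.
  have := Rtrigo1.cos_2PI; have := Rtrigo1.sin_2PI.
  by rewrite RmultE IZRposE INRE /= R0E R1E /cis => -> ->.
have [m m_prim m_dvd_n] := prim_order_exists n_gt0 omega_n.
suff n_eq_m : n = m by rewrite {1}n_eq_m.
apply/eqP; rewrite eqn_leq (dvdn_leq n_gt0 m_dvd_n) andbT leqNgt; apply/negP => m_lt_n.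
have m_pos : 0 < m%:R :> RR by rewrite ltr0n (prim_order_gt0 m_prim).
have PI_pos := PI_gt0.
have := prim_expr_order m_prim; rewrite /omega cis_expr => /eqP.
rewrite eq_complex /= => /andP[/eqP cos1 _].
have m_lt_n' : m%:R < n%:R :> RR by rewrite ltr_nat.
suff : cos (2 * PI / n%:R *+ m) < 1 by rewrite cos1 ltxx.
rewrite -[_ *+ m]mulr_natr mulrAC -mulrA; apply: cos_lt1.
  by apply: mulr_gt0; [lra | apply: divr_gt0].
have : m%:R / n%:R < 1 :> RR by rewrite ltr_pdivrMr // mul1r.
by nra.
Qed.

Lemma Rz_expr z d : Rz z ^+ d = mx2 (z ^+ d) (\sum_(i < d) z ^+ i) 0 1.
Proof.
elim: d => [|d IH]; first by rewrite expr0 big_ord0 mx2_1.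
rewrite exprSr IH Rz_mx2 -mulmxE mx2_mul big_ord_recr exprSr /=.
by congr mx2; ring.
Qed.

Lemma R3S_mx2 z : z != 0 ->
  Rz z *m (Rz z *m (Rz z *m Sz z)) = mx2 (1 + z + z ^+ 2) (- z ^+ 2) 1 0.
Proof. by move=> z_neq0; rewrite Rz_mx2 Sz_mx2 !mx2_mul; congr mx2; field. Qed.

Lemma horner_lucas (x : C) k :
  (pQtoC (lucas (1 + 'X + 'X^2) 'X^2 k)).[x] = lucas (1 + x + x ^+ 2) (x ^+ 2) k.
Proof.
rewrite -horner_evalE !rmorph_lucas /= !horner_evalE.
by rewrite !(rmorphD pQtoC) rmorph1 /= map_polyX map_polyXn !hornerE.
Qed.

Lemma lucas_omega_neq0 n k : (6 <= n)%N -> (0 < k)%N ->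
  lucas (1 + omega n + omega n ^+ 2) (omega n ^+ 2) k != 0.
Proof.
move=> n_ge6 k_gt0; set w := omega n; set c := cos (2 * PI / n%:R).
have n_gt0 : (0 < n)%N by apply: leq_trans n_ge6.
have w_neq0 : w != 0 by rewrite (prim_root_eq0 (omega_prim n_gt0)) -lt0n.
have c_ge : 1 / 2 <= c.
  have PI_pos := PI_gt0; have n_ge6' : 6 <= n%:R :> RR by rewrite (ler_nat _ 6).
  apply: cos_ge_half; first by rewrite divr_ge0 ?ler0n //; lra.
  by rewrite ler_pdivrMr ?(lt_le_trans _ n_ge6') // mulrAC ler_pdivlMr //; nra.
have -> : 1 + w + w ^+ 2 = w * (1 + (2 * c)%:C%C).
  have w_add : w + w^-1 = (2 * c)%:C%C := cis_add_inv _.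
  by rewrite -w_add; field.
have t_ge2 : 2 <= 1 + 2 * c by lra.
have real_lucas : (lucas (1 + 2 * c) 1 k)%:C%C = lucas (1 + (2 * c)%:C%C) 1 k.
  by rewrite (rmorph_lucas (real_complex RR)) (rmorphD (real_complex RR)) !rmorph1.
apply/eqP => U0; have := lucas_scale w (1 + (2 * c)%:C%C) 1 k.
rewrite mulr1 U0 mulr0 => /esym/eqP; rewrite mulf_eq0 expf_eq0 (negPf w_neq0) andbF /=.
rewrite -real_lucas fmorph_eq0; apply/negP.
by rewrite gt_eqF // (lt_le_trans _ (lucas_ge k t_ge2)) // ltr0n.
Qed.

Section FiniteGroupOrder.
Variable z : C.
Hypotheses (z_neq0 : z != 0) (z_fin : PSLq_spec_finite z).

Lemma finite_prim_root : exists2 n, (1 < n)%N & n.-primitive_root z.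
Proof.
have [d d_gt0 [c]] := finite_scalar_power z_neq0 z_fin (Gz_R z).
rewrite Rz_expr scalar_mx2 => /mx2_inj[zd sum0 _ c1]; rewrite -c1 in zd.
have [n n_prim _] := prim_order_exists d_gt0 zd.
exists n => //; rewrite ltn_neqAle (prim_order_gt0 n_prim) andbT.
apply/eqP => n1; rewrite -n1 in n_prim.
have z1 : z = 1 by rewrite -[z]expr1 (prim_expr_order n_prim).
move: sum0; rewrite z1 (eq_bigr (fun=> 1)) => [|i _]; last by rewrite expr1n.
by rewrite sumr_const card_ord => /eqP; rewrite pnatr_eq0 gtn_eqF.
Qed.

Lemma finite_order_lt6 n : n.-primitive_root z -> (n < 6)%N.
Proof.
move=> z_prim; rewrite ltnNge; apply/negP => n_ge6.
have R3S_Gz : in_Gz z (Rz z *m (Rz z *m (Rz z *m Sz z))).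
  by do 3![apply: Gz_mul; first exact: Gz_R]; exact: Gz_S.
have [[|k] // _ [c]] := finite_scalar_power z_neq0 z_fin R3S_Gz.
rewrite R3S_mx2 // companion_expr scalar_mx2 => /mx2_inj[_ _ Uk _].
have w_prim := omega_prim (prim_order_gt0 z_prim).
have : root (pQtoC (lucas (1 + 'X + 'X^2) 'X^2 k.+1)) z by rewrite /root horner_lucas Uk.
move=> /(root_prim_conj z_prim w_prim); rewrite /root horner_lucas.
by rewrite (negPf (lucas_omega_neq0 n_ge6 _)).
Qed.

End FiniteGroupOrder.

Theorem corollary4p3 (z : C) (hz : z != 0) :
  PSLq_spec_finite z <->
  exists n : nat, (n \in [:: 2; 3; 4; 5]%N) /\ n.-primitive_root z.
Proof.
split=> [z_fin | [n [n_small z_prim]]]; last exact: PSLq_finite_small_order n_small z_prim.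
have [n n_gt1 z_prim] := finite_prim_root hz z_fin.
exists n; split=> //; have := finite_order_lt6 hz z_fin z_prim.
by rewrite !inE; lia.
Qed.
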